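(* Let $U$ be a finite nonempty set, $(T,I,N)$ a residual triplet, $\widetilde{R}$ a $T$-preorder relation on $U$, $A$ a fuzzy set on $U$, and $L:\mathbb{R}\times\mathbb{R}\to\mathbb{R}^+$ a loss function of $\lor$-type. Let $\hat{A}:U\to[0,1]$ be an optimal solution of the problem $$\text{minimize }\sum_{u\in U}L(A(u),\hat{A}(u))\quad\text{subject to } T(\widetilde{R}(u,v),\hat{A}(v))\le\hat{A}(u)\ (u,v\in U),\quad 0\le\hat{A}(u)\le1\ (u\in U).$$ Then for every $u\in U$: if $\hat{A}(u)>A(u)$, then $\hat{A}(u)=\max\{T(\widetilde{R}(u,v),\hat{A}(v)); v\in U, v\ne u\}$; and if $\hat{A}(u)<A(u)$, then $\hat{A}(u)=\min\{I(\widetilde{R}(v,u),\hat{A}(v)); v\in U, v\ne u\}$.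
   Context: A residual triplet $(T,I,N)$ consists of a left-continuous $t$-norm $T$, its residual implicator $I(x,y)=\sup\{\beta\in[0,1]: T(x,\beta)\le y\}$ and $N(x)=I(x,0)$. $\widetilde{R}:U\times U\to[0,1]$ is a $T$-preorder if reflexive and $T$-transitive ($T(\widetilde{R}(u,v),\widetilde{R}(v,w))\le\widetilde{R}(u,w)$). A fuzzy set on $U$ is a map $U\to[0,1]$. A loss function $L$ is of $\lor$-type if for every real $a$: $L(a,a)=0$; the functions $x\mapsto L(x,a)$ and $x\mapsto L(a,x)$ are increasing for $x>a$; and these functions are decreasing for $x<a$. *)

From HB Require Import structures.
From mathcomp Require Import all_boot all_order all_algebra.
From mathcomp Require Import reals.
Set Implicit Arguments. Unset Strict Implicit. Unset Printing Implicit Defensive.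
Import Order.TTheory GRing.Theory Num.Theory.
Local Open Scope ring_scope.

Section Defs.
Variable R : realType.

Definition in01 (x : R) := 0 <= x <= 1.

Definition tnorm (T : R -> R -> R) : Prop :=
  [/\ (forall x y, in01 x -> in01 y -> in01 (T x y)),
      (forall x y, in01 x -> in01 y -> T x y = T y x),
      (forall x y z, in01 x -> in01 y -> in01 z -> T x (T y z) = T (T x y) z),
      (forall x x' y y', in01 x -> in01 x' -> in01 y -> in01 y' ->
          x <= x' -> y <= y' -> T x y <= T x' y') &
      (forall x, in01 x -> T x 1 = x)].

(* left-continuity (in the first argument; by commutativity in both). *)
Definition left_continuous_tnorm (T : R -> R -> R) : Prop :=
  tnorm T /\
  forall x y, 0 < x <= 1 -> in01 y -> forall eps, 0 < eps ->
    exists2 delta, 0 < delta &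
      forall z, 0 <= z -> x - delta < z <= x -> `|T z y - T x y| < eps.

(* I(x,y) = sup { b in [0,1] : T(x,b) <= y } for x, y in [0,1]. *)
Definition residual_implicator (T I : R -> R -> R) : Prop :=
  forall x y, in01 x -> in01 y ->
    (forall b, in01 b -> T x b <= y -> b <= I x y) /\
    (forall c, (forall b, in01 b -> T x b <= y -> b <= c) -> I x y <= c).

Definition residual_triplet (T I : R -> R -> R) (N : R -> R) : Prop :=
  [/\ left_continuous_tnorm T, residual_implicator T I &
      forall x, in01 x -> N x = I x 0].

Definition fuzzy_set (U : Type) (A : U -> R) := forall u, in01 (A u).

Definition T_preorder (U : Type) (T : R -> R -> R) (Rt : U -> U -> R) : Prop :=
  [/\ (forall u v, in01 (Rt u v)),
      (forall u, Rt u u = 1) &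
      (forall u v w, T (Rt u v) (Rt v w) <= Rt u w)].

(* Loss function of \/-type with values in R^+ (nonnegative);
   "increasing"/"decreasing" read strictly. *)
Definition vee_type_loss (L : R -> R -> R) : Prop :=
  [/\ (forall x y, 0 <= L x y),
      (forall a, L a a = 0),
      (forall a x y, a < x -> x < y -> L x a < L y a /\ L a x < L a y) &
      (forall a x y, x < y -> y < a -> L y a < L x a /\ L a y < L a x)].

Definition feasible (U : Type) (T : R -> R -> R) (Rt : U -> U -> R) (B : U -> R) :=
  (forall u v, T (Rt u v) (B v) <= B u) /\ (forall u, 0 <= B u <= 1).

Definition optimal_solution (U : finType) (T L : R -> R -> R) (Rt : U -> U -> R)
    (A Ah : U -> R) : Prop :=
  feasible T Rt Ah /\
  forall B, feasible T Rt B ->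
    \sum_(u : U) L (A u) (Ah u) <= \sum_(u : U) L (A u) (B u).

End Defs.

From HB Require Import structures.
From mathcomp Require Import all_boot all_order all_algebra.
From mathcomp Require Import reals.
From mathcomp Require Import lra.
Set Implicit Arguments.
Unset Strict Implicit.
Unset Printing Implicit Defensive.

Import Order.TTheory GRing.Theory Num.Theory.
Local Open Scope ring_scope.

(* Moving [Ah u] alone to a value strictly between [Ah u] and [A u] strictly
   lowers the loss, so an optimal solution admits no such feasible move.  If
   [A u < Ah u] and [Ah u] exceeded every bound [T (Rt u v) (Ah v)] imposed by
   the other points, lowering it to the largest of these bounds and [A u] would
   stay feasible.  Dually, if [Ah u < A u] lay below every [I (Rt v u) (Ah v)],
   raising it would stay feasible by residuation [T x b <= y <-> b <= I x y],
   the one place where left-continuity of [T] is used. *)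

Section VeeLoss.
Variables (R : realType) (L : R -> R -> R).
Hypothesis vL : vee_type_loss L.

Lemma vee_loss_gt0 a y : a != y -> 0 < L a y.
Proof.
case: vL => L_ge0 _ L_incr L_decr neq_ay.
have [lt_ay|lt_ya|eq_ay] := ltgtP a y; last by rewrite eq_ay eqxx in neq_ay.
- have [_] := L_incr a ((a + y) / 2) y ltac:(lra) ltac:(lra).
  exact: le_lt_trans (L_ge0 _ _).
- have [_] := L_decr a y ((y + a) / 2) ltac:(lra) ltac:(lra).
  exact: le_lt_trans (L_ge0 _ _).
Qed.

Lemma vee_loss_ltr a x y : a <= x -> x < y -> L a x < L a y.
Proof.
case: vL => _ L_aa L_incr _; rewrite le_eqVlt => /predU1P[<- lt_ay|lt_ax lt_xy].
  by rewrite L_aa vee_loss_gt0 // lt_eqF.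
by have [] := L_incr a x y lt_ax lt_xy.
Qed.

Lemma vee_loss_ltl a x y : y < x -> x <= a -> L a x < L a y.
Proof.
case: vL => _ L_aa _ L_decr lt_yx; rewrite le_eqVlt => /predU1P[<- |lt_xa].
  by rewrite L_aa vee_loss_gt0 // (gt_eqF lt_yx).
by have [] := L_decr a y x lt_yx lt_xa.
Qed.

End VeeLoss.

Section TNorm.
Variables (R : realType) (T : R -> R -> R).
Hypothesis tT : tnorm T.

Lemma in01_1 : in01 (1 : R).
Proof. by rewrite /in01 ler01 lexx. Qed.

Lemma tnorm1l x : in01 x -> T 1 x = x.
Proof. by case: tT => _ T_comm _ _ T_x1 x01; rewrite T_comm ?T_x1 //; exact: in01_1. Qed.

Lemma tnorm_homor x y y' : in01 x -> in01 y -> in01 y' -> y <= y' -> T x y <= T x y'.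
Proof. by case: tT => _ _ _ T_mono _ *; apply: T_mono. Qed.

Lemma tnorm0r x : in01 x -> T x 0 = 0.
Proof.
case: (tT) => T_01 _ _ T_mono _ x01.
have in01_0 : in01 (0 : R) by rewrite /in01 lexx ler01.
apply: le_anti; case/andP: (T_01 x 0 x01 in01_0) => -> _; rewrite andbT.
rewrite -[leRHS](tnorm1l in01_0).
by apply: T_mono => //; [exact: in01_1 | case/andP: x01].
Qed.

End TNorm.

Section Residuation.
Variables (R : realType) (T I : R -> R -> R).
Hypotheses (lcT : left_continuous_tnorm T) (resTI : residual_implicator T I).

Let tT : tnorm T := proj1 lcT.

Lemma implicator_le_of_tnorm_gt x y z :
  in01 x -> in01 y -> in01 z -> y < T x z -> I x y <= z.
Proof.
move=> x01 y01 z01 lt_y_Txz; apply: (proj2 (resTI x01 y01)) => c c01 le_Txc_y.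
rewrite leNgt; apply/negP => lt_zc.
have := lt_le_trans lt_y_Txz (le_trans (tnorm_homor tT x01 z01 c01 (ltW lt_zc)) le_Txc_y).
by rewrite ltxx.
Qed.

Lemma tnorm_gt_left x y b : in01 x -> in01 b -> 0 < b -> y < T x b ->
  exists2 z, in01 z & z < b /\ y < T x z.
Proof.
case: (tT) => _ T_comm _ _ _ x01 b01 b_gt0 lt_y_Txb.
have [b_ge0 b_le1] := andP b01.
have [d d_gt0 near_b] := proj2 lcT b x ltac:(lra) x01 (T x b - y) ltac:(lra).
pose z := Num.max 0 (b - d / 2).
have z_ge0 : 0 <= z by rewrite le_max lexx.
have lt_zb : z < b by rewrite gt_max b_gt0 /=; lra.
have z01 : in01 z by rewrite /in01 z_ge0 (le_trans (ltW lt_zb)).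
exists z => //; split => //.
have z_near_b : b - d < z <= b by rewrite (ltW lt_zb) andbT lt_max; apply/orP; right; lra.
have := near_b z z_ge0 z_near_b; rewrite T_comm // [T b x]T_comm //.
by rewrite ltr_norml => /andP[? _]; lra.
Qed.

Lemma residuation x y b : in01 x -> in01 y -> in01 b -> (T x b <= y) = (b <= I x y).
Proof.
move=> x01 y01 b01; apply/idP/idP; first exact: (proj1 (resTI x01 y01)).
move=> le_b_Ixy; rewrite leNgt; apply/negP => lt_y_Txb.
have [b_gt0|b_le0] := ltP 0 b; last first.
  have b0 : b = 0 by apply: le_anti; rewrite b_le0; case/andP: b01.
  by move: lt_y_Txb; rewrite b0 tnorm0r // ltNge; case/andP: y01 => ->.
have [z z01 [lt_zb lt_y_Txz]] := tnorm_gt_left x01 b01 b_gt0 lt_y_Txb.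
have le_Ixy_z := implicator_le_of_tnorm_gt x01 y01 z01 lt_y_Txz.
by have := le_lt_trans (le_trans le_b_Ixy le_Ixy_z) lt_zb; rewrite ltxx.
Qed.

End Residuation.

Section OptimalSolution.
Variables (R : realType) (U : finType) (T I L : R -> R -> R) (Rt : U -> U -> R).
Variables (A Ah : U -> R).
Hypotheses (tT : tnorm T) (preRt : T_preorder T Rt) (vL : vee_type_loss L).
Hypotheses (lcT : left_continuous_tnorm T) (resTI : residual_implicator T I).
Hypothesis optAh : optimal_solution T L Rt A Ah.

Let feasAh : feasible T Rt Ah := proj1 optAh.
Let Rt01 u v : in01 (Rt u v) := let: And3 Rt01 _ _ := preRt in Rt01 u v.

Lemma feasible_update u b : in01 b ->
    (forall v, v != u -> T (Rt u v) (Ah v) <= b) ->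
    (forall w, w != u -> T (Rt w u) b <= Ah w) ->
  feasible T Rt [eta Ah with u |-> b].
Proof.
case: preRt feasAh => _ Rt_refl _ [feasT feas01] b01 le_out le_in; split => [w v|w] /=.
  have [->|neq_wu] := eqVneq w u; have [->|neq_vu] := eqVneq v u.
  - by rewrite Rt_refl tnorm1l.
  - exact: le_out.
  - exact: le_in.
  - exact: feasT.
by case: eqP => _; [exact: b01 | exact: feas01].
Qed.

Lemma optimal_update_le u b : feasible T Rt [eta Ah with u |-> b] ->
  L (A u) (Ah u) <= L (A u) b.
Proof.
move=> /(proj2 optAh); rewrite (bigD1 u) //= [leRHS](bigD1 u) //= eqxx.
rewrite [X in _ <= _ + X](eq_bigr (fun v => L (A v) (Ah v))) ?lerD2r // => v.
by move=> /negbTE ->.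
Qed.

Lemma optimal_gt_eq_bigmax u : in01 (A u) -> A u < Ah u ->
  Ah u = \big[Num.max/0]_(v | v != u) T (Rt u v) (Ah v).
Proof.
case: feasAh => feasT feas01 A01 lt_A_Ah.
set M := \big[Num.max/0]_(v | v != u) _.
have le_M_Ah : M <= Ah u.
  by apply: bigmax_le => [|v _]; [case/andP: (feas01 u) | exact: feasT].
apply/eqP; rewrite eq_le le_M_Ah andbT leNgt; apply/negP => lt_M_Ah.
pose b := Num.max M (A u).
have lt_b_Ah : b < Ah u by rewrite gt_max lt_M_Ah.
have le_A_b : A u <= b by rewrite le_max lexx orbT.
have b01 : in01 b.
  case/andP: A01 (feas01 u) => A_ge0 _ /andP[_ Ah_le1].
  by rewrite /in01; apply/andP; split; lra.
suff : L (A u) (Ah u) <= L (A u) b by rewrite leNgt (vee_loss_ltr vL le_A_b lt_b_Ah).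
apply/optimal_update_le/feasible_update => // [v neq_vu | w neq_wu].
- by rewrite le_max le_bigmax_cond.
- exact: le_trans (tnorm_homor tT (Rt01 w u) b01 (feas01 u) (ltW lt_b_Ah)) (feasT w u).
Qed.

Lemma optimal_lt_eq_bigmin u : in01 (A u) -> Ah u < A u ->
  Ah u = \big[Num.min/1]_(v | v != u) I (Rt v u) (Ah v).
Proof.
case: feasAh => feasT feas01 A01 lt_Ah_A.
set m := \big[Num.min/1]_(v | v != u) _.
have le_Ah_m : Ah u <= m.
  apply: le_bigmin => [|v _]; first by case/andP: (feas01 u).
  by rewrite -(residuation lcT resTI (Rt01 v u) (feas01 v) (feas01 u)) feasT.
apply/eqP; rewrite eq_le le_Ah_m /= leNgt; apply/negP => lt_Ah_m.
pose b := Num.min m (A u).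
have lt_Ah_b : Ah u < b by rewrite lt_min lt_Ah_m.
have le_b_A : b <= A u by rewrite ge_min lexx orbT.
have b01 : in01 b.
  case/andP: A01 (feas01 u) => _ A_le1 /andP[Ah_ge0 _].
  by rewrite /in01; apply/andP; split; lra.
suff : L (A u) (Ah u) <= L (A u) b by rewrite leNgt (vee_loss_ltl vL lt_Ah_b le_b_A).
apply/optimal_update_le/feasible_update => // [v neq_vu | w neq_wu].
- exact: le_trans (feasT u v) (ltW lt_Ah_b).
- rewrite (residuation lcT resTI (Rt01 w u) (feas01 w) b01).
  by rewrite ge_min bigmin_le_cond.
Qed.

End OptimalSolution.

Theorem lemma1 (R : realType) (U : finType) (u0 : U)
    (T I : R -> R -> R) (N : R -> R) (Rt : U -> U -> R) (A : U -> R)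
    (L : R -> R -> R) (Ah : U -> R) :
  residual_triplet T I N ->
  T_preorder T Rt ->
  fuzzy_set A ->
  vee_type_loss L ->
  optimal_solution T L Rt A Ah ->
  forall u : U,
    (A u < Ah u ->
       Ah u = \big[Num.max/0]_(v | v != u) T (Rt u v) (Ah v)) /\
    (Ah u < A u ->
       Ah u = \big[Num.min/1]_(v | v != u) I (Rt v u) (Ah v)).
Proof.
move=> [lcT resTI _] preRt A01 vL optAh u; split.
- exact: optimal_gt_eq_bigmax (proj1 lcT) preRt vL optAh u (A01 u).
- exact: optimal_lt_eq_bigmin (proj1 lcT) preRt vL lcT resTI optAh u (A01 u).
Qed.
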